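(* Let ${\bf u}\in\mathcal A^{\mathbb N}$ have its language closed under reversal. Suppose $v$ is a palindromic complete mirror return to a factor $w$ of ${\bf u}$ such that $b\widetilde w$ is a suffix of $v$ and $av$ is a factor of ${\bf u}$ for some letters $a,b\in\mathcal A$. Then $\{(a,-1),(b,+1)\}$ is an edge of $\Gamma(w)$. If moreover $w$ is a palindrome and $a\ne b$, then $\{a,b\}$ is an edge of $\Theta(w)$.
   Context: $\widetilde w$ is the reversal of $w$; the language of ${\bf u}$ is closed under reversal if the reversal of every factor is a factor. A word $c=c_1c_2\cdots c_n$ that is a factor of ${\bf u}$ is a complete mirror return to $w$ if neither $w$ nor $\widetilde w$ is a factor of $c_2\cdots c_{n-1}$, and either $w$ is a prefix and $\widetilde w$ a suffix of $c$, or $\widetilde w$ is a prefix and $w$ a suffix of $c$. With $E^\pm(w)$ the sets of right/left letter extensions of $w$ and $E(w)=\{(a,b): awb \text{ factor}\}$, $\Gamma(w)$ is the bipartite graph on $(E^-(w)\times\{-1\})\cup(E^+(w)\times\{+1\})$ with edges $\{(a,-1),(b,+1)\}$ for $(a,b)\in E(w)$; for palindromic $w$, $\Theta(w)$ is the graph on $E^+(w)$ with edges $\{a,b\}$ for $(a,b)\in E(w)$, $a\ne b$. *)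

From mathcomp Require Import all_boot all_algebra.
Set Implicit Arguments. Unset Strict Implicit. Unset Printing Implicit Defensive.

(* Infinite words over a finite alphabet A are functions u : nat -> A;
   finite words are sequences seq A.  The reversal of w is rev w. *)

Definition factor (A : finType) (u : nat -> A) (w : seq A) : Prop :=
  exists i, w = mkseq (fun k => u (i + k)) (size w).

Definition closed_under_reversal (A : finType) (u : nat -> A) : Prop :=
  forall w, factor u w -> factor u (rev w).

Definition palindrome (A : finType) (w : seq A) : Prop := rev w = w.

Definition inner (A : finType) (c : seq A) : seq A := drop 1 (take (size c).-1 c).

Definition complete_mirror_return (A : finType) (u : nat -> A) (w c : seq A) : Prop :=
  [/\ factor u c,
      ~~ infix w (inner c),
      ~~ infix (rev w) (inner c) &
      (prefix w c && suffix (rev w) c) || (prefix (rev w) c && suffix w c)].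

Definition Eext (A : finType) (u : nat -> A) (w : seq A) (a b : A) : Prop :=
  factor u (a :: w ++ [:: b]).
Definition Eplus (A : finType) (u : nat -> A) (w : seq A) (b : A) : Prop :=
  factor u (w ++ [:: b]).
Definition Eminus (A : finType) (u : nat -> A) (w : seq A) (a : A) : Prop :=
  factor u (a :: w).

Definition Gamma_vertex (A : finType) (u : nat -> A) (w : seq A) (x : A * int) : Prop :=
  (x.2 = (-1 : int)%R /\ Eminus u w x.1) \/ (x.2 = (1 : int)%R /\ Eplus u w x.1).

Definition Gamma_edge (A : finType) (u : nat -> A) (w : seq A) (x y : A * int) : Prop :=
  exists a b, Eext u w a b /\
    ((x = (a, (-1 : int)%R) /\ y = (b, (1 : int)%R)) \/ (x = (b, (1 : int)%R) /\ y = (a, (-1 : int)%R))).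

Definition Theta_vertex (A : finType) (u : nat -> A) (w : seq A) (x : A) : Prop :=
  Eplus u w x.

Definition Theta_edge (A : finType) (u : nat -> A) (w : seq A) (x y : A) : Prop :=
  exists a b, [/\ Eext u w a b, a <> b & ((x = a /\ y = b) \/ (x = b /\ y = a))].

From mathcomp Require Import all_boot all_algebra.
Set Implicit Arguments. Unset Strict Implicit. Unset Printing Implicit Defensive.

(* Since v is a palindrome, its suffix b (rev w) reverses to the prefix w b of v;
   prefixing the letter a then makes a w b a prefix of the factor a v. *)

Lemma factor_prefix (A : finType) (u : nat -> A) (p s : seq A) :
  prefix p s -> factor u s -> factor u p.
Proof.
move=> /prefixP [t ->] [i Hi]; exists i.
rewrite -(take_size_cat t (erefl (size p))) Hi /mkseq -map_take take_iota.
by rewrite size_cat (minn_idPl (leq_addr _ _)) size_map size_iota.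
Qed.

Lemma palindrome_suffix_rev (A : finType) (s v : seq A) :
  palindrome v -> suffix (rev s) v -> prefix s v.
Proof. by move=> pal_v; rewrite suffix_revLR pal_v. Qed.

Lemma Eext_palindrome_suffix (A : finType) (u : nat -> A) (w v : seq A) (a b : A) :
  palindrome v -> suffix (b :: rev w) v -> factor u (a :: v) -> Eext u w a b.
Proof.
move=> pal_v; rewrite -rev_rcons => /(palindrome_suffix_rev pal_v) wb_v av.
by apply: factor_prefix av; rewrite /= eqxx cats1.
Qed.

Theorem lemma17 (A : finType) (u : nat -> A) (w v : seq A) (a b : A) :
  closed_under_reversal u ->
  factor u w ->
  palindrome v ->
  complete_mirror_return u w v ->
  suffix (b :: rev w) v ->
  factor u (a :: v) ->
  Gamma_edge u w (a, (-1 : int)%R) (b, (1 : int)%R) /\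
  (palindrome w -> a <> b -> Theta_edge u w a b).
Proof.
move=> _ _ pal_v _ suff_v fact_av.
have awb := Eext_palindrome_suffix pal_v suff_v fact_av.
split; first by exists a, b; split; last left.
by move=> _ a_neq_b; exists a, b; split; last left.
Qed.
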